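(* For each $a\in\{1,\dots,n\}$, the anticommutator $\{\psi_a,\psi_a^*\}=\psi_a\psi_a^*+\psi_a^*\psi_a$ belongs to the center of $\mathrm{Cl}_q(n,k)$ and satisfies $\{\psi_a,\psi_a^*\}^2=1$.
   Context: Let $\mathbb{k}$ be a field of characteristic different from $2$, let $q\in\mathbb{k}^\times$, and let $n,k$ be positive integers. The quantum Clifford algebra $\mathrm{Cl}_q(n,k)$ is the unital associative $\mathbb{k}$-algebra generated by $\psi_a,\psi_a^*,\omega_a,\omega_a^{-1}$ for $a\in\{1,\dots,n\}$, subject to the relations (for all $a,b\in\{1,\dots,n\}$): $\omega_a\omega_b=\omega_b\omega_a$; $\omega_a\omega_a^{-1}=1$; $\omega_a\psi_b=q^{\delta_{ab}}\psi_b\omega_a$; $\omega_a\psi_b^*=q^{-\delta_{ab}}\psi_b^*\omega_a$; $\psi_a\psi_b+\psi_b\psi_a=0$; $\psi_a^*\psi_b^*+\psi_b^*\psi_a^*=0$; $\psi_a\psi_a^*+q^k\psi_a^*\psi_a=\omega_a^{-k}$; $\psi_a\psi_a^*+q^{-k}\psi_a^*\psi_a=\omega_a^{k}$; and $\psi_a\psi_b^*+\psi_b^*\psi_a=0$ if $a\neq b$. *)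

From HB Require Import structures.
From mathcomp Require Import all_boot all_order all_algebra.
Set Implicit Arguments. Unset Strict Implicit. Unset Printing Implicit Defensive.
Import GRing.Theory.
Local Open Scope ring_scope.

(* The defining relations of Cl_q(n,k), for a family of elements
   psi a, psis a (the starred psi_a), om a (= omega_a), omi a (= omega_a^{-1})
   of a F-algebra A, indexed by a : 'I_n. *)
Definition ClqRelations (F : fieldType) (A : algType F) (n k : nat) (q : F)
  (psi psis om omi : 'I_n -> A) : Prop :=
  (forall a b : 'I_n, om a * om b = om b * om a)
  /\ (forall a : 'I_n, om a * omi a = 1)
  /\ (forall a b : 'I_n, om a * psi b = (q ^+ (a == b)) *: (psi b * om a))
  /\ (forall a b : 'I_n, om a * psis b = (q ^- (a == b)) *: (psis b * om a))
  /\ (forall a b : 'I_n, psi a * psi b + psi b * psi a = 0)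
  /\ (forall a b : 'I_n, psis a * psis b + psis b * psis a = 0)
  /\ (forall a : 'I_n, psi a * psis a + (q ^+ k) *: (psis a * psi a) = omi a ^+ k)
  /\ (forall a : 'I_n, psi a * psis a + (q ^- k) *: (psis a * psi a) = om a ^+ k)
  /\ (forall a b : 'I_n, a != b -> psi a * psis b + psis b * psi a = 0).

Inductive in_subalg (F : fieldType) (A : algType F) (S : A -> Prop) : A -> Prop :=
  | subalg_base x : S x -> in_subalg S x
  | subalg_one : in_subalg S 1
  | subalg_add x y : in_subalg S x -> in_subalg S y -> in_subalg S (x + y)
  | subalg_mul x y : in_subalg S x -> in_subalg S y -> in_subalg S (x * y)
  | subalg_scale (c : F) x : in_subalg S x -> in_subalg S (c *: x).

Definition Clq_generators (F : fieldType) (A : algType F) (n : nat)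
  (psi psis om omi : 'I_n -> A) : A -> Prop :=
  fun x => exists a : 'I_n, [\/ x = psi a, x = psis a, x = om a | x = omi a].

From HB Require Import structures.
From mathcomp Require Import all_boot all_order all_algebra.
Import GRing.Theory.
Local Open Scope ring_scope.

(* Write X = psi_a psi_a^* and Y = psi_a^* psi_a, so that the anticommutator
   is X + Y.  Since psi_a and psi_a^* square to zero (char <> 2), XY = YX = 0,
   hence (X + Y)^2 = (X + q^k Y)(X + q^-k Y) = omega_a^-k omega_a^k = 1.
   Centrality is checked on generators: psi_b and psi_b^* (b <> a) anticommute
   with both factors of X and of Y; psi_a commutes with X + Y since both
   products reduce to psi_a psi_a^* psi_a, and likewise for psi_a^*; and
   omega_b commutes with X and Y because the q-factors picked up passing
   psi_a and psi_a^* cancel.  The relations only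
   make omega_a^-1 a right inverse of omega_a; it is also a left inverse
   because omega_a^-k = X + q^k Y commutes with omega_a^k. *)

Definition anticomm {R : pzRingType} (u v : R) : R := u * v + v * u.

Lemma anticommC (R : pzRingType) (u v : R) : anticomm u v = anticomm v u.
Proof. exact: addrC. Qed.

Lemma addrr_eq0 (F : fieldType) (A : lmodType F) (x : A) :
  (2%:R : F) != 0 -> x + x = 0 -> x = 0.
Proof.
move=> two_neq0 xx0; apply/eqP.
have /eqP : (2%:R : F) *: x = 0 by rewrite scaler_nat mulr2n.
by rewrite scaler_eq0 (negbTE two_neq0).
Qed.

Lemma expr_mul_eq1 (R : pzRingType) (x y : R) (m : nat) :
  x * y = 1 -> x ^+ m * y ^+ m = 1.
Proof.
move=> xy1; elim: m => [|m IHm]; first by rewrite !expr0 mulr1.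
by rewrite exprSr exprS mulrA -(mulrA _ x) xy1 mulr1 IHm.
Qed.

Lemma mulr_eq1_expr (R : pzRingType) (x y : R) (k : nat) : (0 < k)%N ->
  x * y = 1 -> y ^+ k * x ^+ k = 1 -> y * x = 1.
Proof.
case: k => // m _ xy1 yxk1.
have -> : y = y ^+ m.+1 * x ^+ m.
  by rewrite -[LHS]mul1r -yxk1 (exprSr x) -mulrA -(mulrA _ x) xy1 mulr1.
by rewrite -mulrA -exprSr.
Qed.

Lemma commr_inverse (R : pzRingType) (c x y : R) :
  x * y = 1 -> y * x = 1 -> GRing.comm c x -> GRing.comm c y.
Proof.
move=> xy1 yx1 cx; rewrite /GRing.comm -[c * y]mul1r -yx1 -mulrA (mulrA x) -cx.
by rewrite -!mulrA xy1 mulr1.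
Qed.

Lemma commr_mul_anticomm (R : pzRingType) (u v x : R) :
  anticomm u x = 0 -> anticomm v x = 0 -> GRing.comm (u * v) x.
Proof.
rewrite /anticomm => /eqP; rewrite addr_eq0 => /eqP ux /eqP; rewrite addr_eq0 => /eqP vx.
by rewrite /GRing.comm -mulrA vx mulrN mulrA ux mulNr opprK mulrA.
Qed.

Lemma anticomm_commr (R : pzRingType) (u v x : R) :
  anticomm u x = 0 -> anticomm v x = 0 -> GRing.comm (anticomm u v) x.
Proof.
by move=> ux vx; apply/commr_sym/commrD; apply/commr_sym; apply: commr_mul_anticomm.
Qed.

Lemma anticomm_nil_comml (R : pzRingType) (u v : R) :
  u * u = 0 -> GRing.comm (anticomm u v) u.
Proof.
move=> uu0; rewrite /GRing.comm /anticomm mulrDl mulrDr -!mulrA uu0 mulr0 !mulrA.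
by rewrite uu0 mul0r addr0 add0r.
Qed.

Lemma commr_qcomm_mul (R : comPzRingType) (A : algType R) (x u v : A) (s t : R) :
  s * t = 1 -> x * u = s *: (u * x) -> x * v = t *: (v * x) -> GRing.comm x (u * v).
Proof.
move=> st1 xu xv; rewrite /GRing.comm mulrA xu -scalerAl -[u * x * v]mulrA xv scalerAr.
by rewrite scalerA st1 scale1r mulrA.
Qed.

Lemma mulr_sqr0_mid (R : pzRingType) (u v w : R) : v * v = 0 -> u * v * (v * w) = 0.
Proof. by move=> vv0; rewrite mulrA -(mulrA u) vv0 mulr0 mul0r. Qed.

Lemma sqr_add_orth (R : comPzRingType) (A : algType R) (X Y : A) (s t : R) :
  X * Y = 0 -> Y * X = 0 -> s * t = 1 -> (X + Y) ^+ 2 = (X + s *: Y) * (X + t *: Y).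
Proof.
move=> XY0 YX0 st1; rewrite expr2 !mulrDl !mulrDr -!scalerAl -!scalerAr XY0 YX0.
by rewrite !scaler0 scalerA st1 scale1r.
Qed.

Lemma in_subalg_comm (F : fieldType) (A : algType F) (S : A -> Prop) (c x : A) :
  (forall s, S s -> GRing.comm c s) -> in_subalg S x -> GRing.comm c x.
Proof.
move=> cS; elim=> {x} [x /cS // | | x y _ cx _ cy | x y _ cx _ cy | a x _ cx].
- exact: commr1.
- exact: commrD.
- exact: commrM.
- by rewrite /GRing.comm -scalerAr cx scalerAl.
Qed.

Section QuantumClifford.

Context {F : fieldType} {A : algType F} {n k : nat} {q : F}.
Context {psi psis om omi : 'I_n -> A}.

Hypothesis two_neq0 : (2%:R : F) != 0.
Hypothesis q_neq0 : q != 0.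
Hypothesis k_gt0 : (0 < k)%N.
Hypothesis om_omi : forall a, om a * omi a = 1.
Hypothesis om_psi : forall a b, om a * psi b = q ^+ (a == b) *: (psi b * om a).
Hypothesis om_psis : forall a b, om a * psis b = q ^- (a == b) *: (psis b * om a).
Hypothesis psi_anti : forall a b, anticomm (psi a) (psi b) = 0.
Hypothesis psis_anti : forall a b, anticomm (psis a) (psis b) = 0.
Hypothesis psi_psis_omi : forall a, psi a * psis a + q ^+ k *: (psis a * psi a) = omi a ^+ k.
Hypothesis psi_psis_om : forall a, psi a * psis a + q ^- k *: (psis a * psi a) = om a ^+ k.
Hypothesis psi_psis_anti : forall a b, a != b -> anticomm (psi a) (psis b) = 0.

Lemma psi_sqr a : psi a * psi a = 0.
Proof. exact: addrr_eq0 two_neq0 (psi_anti a a). Qed.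

Lemma psis_sqr a : psis a * psis a = 0.
Proof. exact: addrr_eq0 two_neq0 (psis_anti a a). Qed.

Lemma om_comm_psi_psis b a : GRing.comm (om b) (psi a * psis a).
Proof. exact: commr_qcomm_mul (divff (expf_neq0 _ q_neq0)) (om_psi b a) (om_psis b a). Qed.

Lemma om_comm_psis_psi b a : GRing.comm (om b) (psis a * psi a).
Proof. exact: commr_qcomm_mul (mulVf (expf_neq0 _ q_neq0)) (om_psis b a) (om_psi b a). Qed.

Lemma omi_om_expr a : omi a ^+ k * om a ^+ k = 1.
Proof.
have omk_X := commrX k (commr_sym (om_comm_psi_psis a a)).
have omk_Y := commrX k (commr_sym (om_comm_psis_psi a a)).
rewrite -psi_psis_omi mulrDl -scalerAl omk_X omk_Y scalerAr -mulrDr psi_psis_omi.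
exact: expr_mul_eq1.
Qed.

Lemma omi_om a : omi a * om a = 1.
Proof. exact: mulr_eq1_expr k_gt0 (om_omi a) (omi_om_expr a). Qed.

Lemma anticomm_psi_psis_comm_generators a x :
  Clq_generators psi psis om omi x -> GRing.comm (anticomm (psi a) (psis a)) x.
Proof.
case=> b [] ->.
- have [->|ba] := eqVneq b a; first exact: anticomm_nil_comml (psi_sqr a).
  by apply: anticomm_commr; rewrite // anticommC psi_psis_anti.
- have [->|ba] := eqVneq b a; first by rewrite anticommC;
    exact: anticomm_nil_comml (psis_sqr a).
  by apply: anticomm_commr; rewrite // psi_psis_anti // eq_sym.
- exact/commr_sym/commrD/om_comm_psis_psi/om_comm_psi_psis.
- apply: commr_inverse (om_omi b) (omi_om b) _.
  exact/commr_sym/commrD/om_comm_psis_psi/om_comm_psi_psis.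
Qed.

Lemma anticomm_psi_psis_central a x :
  in_subalg (Clq_generators psi psis om omi) x -> GRing.comm (anticomm (psi a) (psis a)) x.
Proof. exact/in_subalg_comm/anticomm_psi_psis_comm_generators. Qed.

Lemma anticomm_psi_psis_sqr a : anticomm (psi a) (psis a) ^+ 2 = 1.
Proof.
rewrite (@sqr_add_orth _ _ _ _ (q ^+ k) (q ^- k)) ?psi_psis_omi ?psi_psis_om ?omi_om_expr //.
- exact: mulr_sqr0_mid (psis_sqr a).
- exact: mulr_sqr0_mid (psi_sqr a).
- exact: divff (expf_neq0 _ q_neq0).
Qed.

End QuantumClifford.

Theorem lemma3p7 (F : fieldType) (hF : (2%:R : F) != 0) (q : F) (hq : q != 0)
  (n k : nat) (hn : (0 < n)%N) (hk : (0 < k)%N)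
  (A : algType F) (psi psis om omi : 'I_n -> A)
  (hrel : ClqRelations k q psi psis om omi) :
  forall a : 'I_n,
    (forall x : A, in_subalg (Clq_generators psi psis om omi) x ->
       (psi a * psis a + psis a * psi a) * x = x * (psi a * psis a + psis a * psi a))
    /\ (psi a * psis a + psis a * psi a) ^+ 2 = 1.
Proof.
move: hrel => [_ [om_omi [om_psi [om_psis [psi_anti [psis_anti rels]]]]]] a.
move: rels => [psi_psis_omi [psi_psis_om psi_psis_anti]].
split=> [x|].
- by apply: (anticomm_psi_psis_central (k := k) (q := q)).
- by apply: (anticomm_psi_psis_sqr (k := k) (q := q)).
Qed.
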